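(* Let $\mathbf{T}$ be a random T-tessellation with distribution $\mu$. Then its flip Papangelou kernel is $P_f(T,F)\equiv 1$; that is, for every measurable $\phi:\mathcal{C}_f\to[0,\infty)$, \[ \mathbb{E}\sum_{F\in\mathcal{F}_{\mathbf{T}}}\phi(F^{-1},F\mathbf{T})=\mathbb{E}\sum_{F\in\mathcal{F}_{\mathbf{T}}}\phi(F,\mathbf{T}). \]
   Context: $D\subset\mathbb{R}^2$ is a compact convex polygon. A polygonal tessellation of $D$ is a finite subdivision into polygonal cells with disjoint interiors; vertices are cell vertices; edges are line segments contained in cell edges, ending at vertices, with no other vertex between their ends; segments are maximal unions of aligned contiguous edges. A T-vertex lies at the intersection of exactly three edges, two of them aligned. A T-tessellation of $D$ is a polygonal tessellation all of whose vertices other than those of $D$ are T-vertices, with no pair of distinct aligned segments; $\mathcal{T}$ is the set of these (with the hitting $\sigma$-algebra). An internal segment (not on $\partial D$) is blocking if it consists of more than one edge. A flip of $T$ is the deletion of an edge at an end of an internal blocking segment, combined with adding a new edge extending the segment that was blocked at the freed vertex up to the next segment; $\mathcal{F}_T$ is the finite set of flips of $T$, $FT$ the result of applying $F$, and $F^{-1}\in\mathcal{F}_{FT}$ the flip reversing $F$. $\mathcal{C}_f=\{(F,T):T\in\mathcal{T},F\in\mathcal{F}_T\}$. For a finite set $L$ of lines hitting $D$, $\mathcal{T}(L)$ is the set of T-tessellations whose internal segments are supported exactly by the lines of $L$. With $\mathbf{L}$ the unit-intensity Poisson line process restricted to $D$, $\mu(A)=Z^{-1}\mathbb{E}\sum_{T\in\mathcal{T}(\mathbf{L})}\mathbf{1}_A(T)$,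 $Z$ a normalizing constant. The flip Campbell measure of a random T-tessellation $\mathbf{T}$ is $C_f(\phi)=\mathbb{E}\sum_{F\in\mathcal{F}_{\mathbf{T}}}\phi(F^{-1},F\mathbf{T})$, and its flip Papangelou kernel is the function $P_f$ with $C_f(\phi)=\mathbb{E}\sum_{F\in\mathcal{F}_{\mathbf{T}}}\phi(F,\mathbf{T})P_f(\mathbf{T},F)$ for all $\phi$. *)

From mathcomp Require Import all_boot all_order all_algebra.
From mathcomp Require Import all_classical all_reals all_analysis.
Import Order.TTheory GRing.Theory Num.Theory numFieldNormedType.Exports.
Set Implicit Arguments. Unset Strict Implicit. Unset Printing Implicit Defensive.
Local Open Scope classical_set_scope.
Local Open Scope ring_scope.

Section TTess.
Variable R : realType.

Definition pt := (R * R)%type.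

Definition aff (a b : pt) (t : R) : pt :=
  (a.1 + t * (b.1 - a.1), a.2 + t * (b.2 - a.2)).

Definition cseg (a b : pt) : set pt := [set x | exists t, 0 <= t <= 1 /\ x = aff a b t].
Definition oseg (a b : pt) : set pt := [set x | exists t, 0 < t < 1 /\ x = aff a b t].
Definition lineL (a b : pt) : set pt := [set x | exists t, x = aff a b t].

Definition is_cvx_polygon (D : set pt) : Prop :=
  (exists (n : nat) (u : nat -> pt) (c : nat -> R),
     D = [set x | forall i, (i < n)%N -> (u i).1 * x.1 + (u i).2 * x.2 <= c i]) /\
  compact D /\ (exists x, interior D x).

Definition bd (D : set pt) : set pt := D `\` interior D.
Definition vertexD (D : set pt) (x : pt) : Prop :=
  D x /\ ~ (exists y z, D y /\ D z /\ y <> z /\ oseg y z x).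

Definition endpt (S : set pt) (p : pt) : Prop := exists q, q <> p /\ S = cseg p q.
Definition relint (S : set pt) (x : pt) : Prop :=
  exists a b, a <> b /\ S = cseg a b /\ oseg a b x.
Definition aligned (S S' : set pt) : Prop :=
  exists a b, a <> b /\ S `<=` lineL a b /\ S' `<=` lineL a b.

(** A tessellation is encoded by the set of its internal segments. *)
Definition tess := set (set pt).

Definition is_Ttess (D : set pt) (T : tess) : Prop :=
  finite_set T /\
  (forall S, T S -> exists a b, a <> b /\ S = cseg a b /\ D a /\ D b /\
                         oseg a b `<=` interior D) /\
  (forall S p, T S -> endpt S p ->
     (bd D p /\ ~ vertexD D p) \/ (exists S', T S' /\ S' <> S /\ relint S' p)) /\
  (forall S S', T S -> T S' -> S <> S' ->
     ~ aligned S S' /\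
     (forall x, S x -> S' x -> (endpt S x /\ relint S' x) \/ (endpt S' x /\ relint S x))).

(** the union of the cell edges (closed set identified with T) *)
Definition skel (D : set pt) (T : tess) : set pt := bd D `|` \bigcup_(S in T) S.

Definition vtx (T : tess) (x : pt) : Prop := exists S, T S /\ endpt S x.

Definition rayp (u v : pt) (t : R) : pt := (v.1 + t * (v.1 - u.1), v.2 + t * (v.2 - u.2)).

(** A flip F = (a, v) of T: the edge [a,v] at the end a of the internal blocking
    segment [a,b] (v being the vertex of ]a,b[ nearest to a) is deleted, and the
    segment [u,v] blocked at v is extended beyond v up to the first point w of the
    next segment (or of the boundary).  T' is the result, w the new endpoint. *)
Definition flip_rel (D : set pt) (T : tess) (F : pt * pt) (T' : tess) (w : pt) : Prop :=
  let a := F.1 in let v := F.2 in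
  exists b u, a <> b /\ T (cseg a b) /\ u <> v /\ T (cseg u v) /\
    cseg u v <> cseg a b /\ oseg a b v /\
    (forall x, oseg a v x -> ~ vtx T x) /\
    (exists t, 0 < t /\ w = rayp u v t /\ skel D T w /\
       (forall t', 0 < t' < t -> ~ skel D T (rayp u v t'))) /\
    T' = (T `\` [set cseg a b; cseg u v]) `|` [set cseg v b; cseg u w].

Definition flips (D : set pt) (T : tess) : set (pt * pt) :=
  [set F | exists T' w, flip_rel D T F T' w /\ is_Ttess D T'].

(** FT and F^{-1} (F^{-1} = (w, v) removes the new edge [v,w]) *)
Definition flipT (D : set pt) (T : tess) (F : pt * pt) : tess :=
  xget T [set T' | exists w, flip_rel D T F T' w].
Definition flipinv (D : set pt) (T : tess) (F : pt * pt) : pt * pt :=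
  (xget F.1 [set w | exists T', flip_rel D T F T' w], F.2).

(** Hitting sigma-algebra on tessellations (via the closed set skel D T). *)
Definition hitG (D : set pt) : set (set tess) :=
  [set A | exists K : set pt, compact K /\ A = [set T | skel D T `&` K !=set0]].
Definition ttype (D : set pt) := g_sigma_algebraType (hitG D).

Definition lineP (th p : R) : set pt := [set x | x.1 * cos th + x.2 * sin th = p].

Definition Hpar (D : set pt) : set (R * R) :=
  [set q | 0 <= q.1 < pi /\ exists x, D x /\ lineP q.1 q.2 x].

Definition lines_of (s : seq (R * R)) : set (set pt) :=
  [set l | exists2 q, q \in s & l = lineP q.1 q.2].

Definition TL (D : set pt) (L : set (set pt)) : set tess :=
  [set T | is_Ttess D T /\
     (forall S, T S -> exists l, L l /\ S `<=` l) /\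
     (forall l, L l -> exists S, T S /\ S `<=` l)].

Fixpoint iint (n : nat) (f : seq (R * R) -> \bar R) : \bar R :=
  match n with
  | 0%N => f [::]
  | n'.+1 => (\int[lebesgue_measure]_th \int[lebesgue_measure]_p
               iint n' (fun s => f ((th, p) :: s)))%E
  end.

Definition indH (D : set pt) (s : seq (R * R)) : bool :=
  `[< forall q, q \in s -> Hpar D q >].

Definition massH (D : set pt) : \bar R :=
  iint 1 (fun s => if indH D s then 1%E else 0%E).

(** E G(L) for L the Poisson line process with intensity d theta dp restricted to D *)
Definition poissonE (D : set pt) (G : set (set pt) -> \bar R) : \bar R :=
  (\sum_(n <oo) ((expR (- fine (massH D)) / (n`!)%:R)%:E *
      iint n (fun s => if indH D s then G (lines_of s) else 0%E)))%E.

Definition unnorm (D : set pt) (h : tess -> \bar R) : \bar R :=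
  poissonE D (fun L => (\sum_(T \in TL D L) h T)%E).

Definition Zc (D : set pt) : \bar R := unnorm D (fun _ => 1%E).

Definition muE (D : set pt) (h : tess -> \bar R) : \bar R :=
  (((fine (Zc D))^-1)%:E * unnorm D h)%E.

End TTess.

From mathcomp Require Import all_boot all_order all_algebra.
From mathcomp Require Import all_classical all_reals all_analysis.
From mathcomp Require Import ring lra.
Import Order.TTheory GRing.Theory Num.Theory numFieldNormedType.Exports.
Local Open Scope classical_set_scope.
Local Open Scope ring_scope.

(* The map (T, F) |-> (FT, F^-1) is an involution of the set of pairs formed by
   a T-tessellation T of T(L) and a flip F of T: a flip is determined by its
   data, its reverse F^-1 is a flip of FT which restores T, and a flip keeps
   every segment on the line it was on, so FT is again in T(L).  Reindexing
   along this involution makes the two sums over such pairs equal for every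
   line configuration L, hence after integrating over the Poisson line
   process and normalising by Z. *)

Set Implicit Arguments. Unset Strict Implicit.

Section NonnegFsbig.
Variable R : realType.
Local Open Scope ereal_scope.

Lemma fsbig_esum (I : choiceType) (A : set I) (a : I -> \bar R) :
  (forall i, 0 <= a i) -> finite_set (A `&` a @^-1` [set~ 0]) ->
  \sum_(i \in A) a i = \esum_(i in A) a i.
Proof.
move=> a0 fin.
rewrite fsbig_supp -esum_fset //; try by move=> i _.
rewrite [RHS](esumID (a @^-1` [set~ 0])); last by move=> i _.
rewrite [X in _ + X]esum1 ?adde0 //.
by move=> i [_ /=]; apply: contra_notP.
Qed.

(* [P] may be infinite: both sides then agree with the corresponding [esum]
   when one of them has finite support, and are both the junk value 0
   otherwise. *)
Lemma pair_fsbig_dep_ge0 (I J : choiceType) (P : set I) (Q : I -> set J)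
    (G : I -> J -> \bar R) :
  (forall i, P i -> finite_set (Q i)) -> (forall i j, 0 <= G i j) ->
  \sum_(i \in P) \sum_(j \in Q i) G i j = \sum_(p \in P `*`` Q) G p.1 p.2.
Proof.
move=> Qfin G0.
have inner i : P i -> \sum_(j \in Q i) G i j = \esum_(j in Q i) G i j.
  by move=> Pi; rewrite esum_fset //; exact: Qfin.
have le_inner i j : P i -> Q i j -> G i j <= \esum_(j in Q i) G i j.
  move=> Pi Qij; apply: esum_ge; exists [set j]; last by rewrite fsbig_set1.
  by split; [exact: finite_set1 | move=> ? ->].
set S := (P `*`` Q) `&` (fun p => G p.1 p.2) @^-1` [set~ 0].
have [Sfin|Sinf] := pselect (finite_set S).
  rewrite (eq_fsbigr (fun i => \esum_(j in Q i) G i j)); last first.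
    by move=> i /set_mem /inner.
  have outer_fin : finite_set (P `&` (fun i => \esum_(j in Q i) G i j) @^-1` [set~ 0]).
    apply: (sub_finite_set _ (finite_image fst Sfin)) => i [Pi /= Gi].
    have : ~ (forall j, Q i j -> G i j = 0) by move=> h; apply: Gi; rewrite esum1.
    by move=> /existsNP [j /not_implyP [Qij Gij]]; exists (i, j).
  rewrite (fsbig_esum _ outer_fin); last by move=> i; apply: esum_ge0 => j _.
  by rewrite (fsbig_esum _ Sfin) // esum_esum.
rewrite [RHS]fsbig_dflt //; apply: fsbig_dflt => Pfin; apply: Sinf.
apply: sub_finite_set (finite_setXR Pfin (fun i hi => Qfin i hi.1)).
move=> [i j] [[/= Pi Qij] /= Gij]; split=> //=; split=> //.
rewrite inner //= => e; apply: Gij.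
by apply/eqP; rewrite eq_le G0 andbT -e; exact: le_inner.
Qed.

End NonnegFsbig.

Section AffineGeometry.
Variable R : realType.
Implicit Types a b u v x y : pt R.

Lemma aff0 a b : aff a b 0 = a.
Proof. by case: a => a1 a2; rewrite /aff /=; congr pair; ring. Qed.

Lemma aff1 a b : aff a b 1 = b.
Proof. by case: a; case: b => b1 b2 a1 a2; rewrite /aff /=; congr pair; ring. Qed.

Lemma aff_sym a b t : aff b a t = aff a b (1 - t).
Proof. by rewrite /aff /=; congr pair; ring. Qed.

Lemma aff_aff a b s s' r :
  aff (aff a b s) (aff a b s') r = aff a b (s + r * (s' - s)).
Proof. by rewrite /aff /=; congr pair; ring. Qed.

Lemma aff_left_aff a b s r : aff a (aff a b s) r = aff a b (r * s).
Proof. by rewrite /aff /=; congr pair; ring. Qed.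

Lemma aff_aff_left a b s r : aff (aff a b s) a r = aff a b (s - r * s).
Proof. by rewrite /aff /=; congr pair; ring. Qed.

Lemma aff_aff_right a b s r : aff (aff a b s) b r = aff a b (s + r * (1 - s)).
Proof. by rewrite /aff /=; congr pair; ring. Qed.

Lemma rayp_aff u v t : rayp u v t = aff u v (1 + t).
Proof. by rewrite /rayp /aff /=; congr pair; ring. Qed.

Lemma rayp_aff_left a b r t : rayp b (aff a b r) t = aff a b (r - t * (1 - r)).
Proof. by rewrite /rayp /aff /=; congr pair; ring. Qed.

Lemma aff_inj a b s s' : a <> b -> aff a b s = aff a b s' -> s = s'.
Proof.
case: a => a1 a2; case: b => b1 b2 ab [e1 e2].
apply/eqP; rewrite -subr_eq0; apply/negPn/negP => ss'; apply: ab.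
have h1 : (s - s') * (b1 - a1) = 0 by rewrite mulrBl; lra.
have h2 : (s - s') * (b2 - a2) = 0 by rewrite mulrBl; lra.
move/eqP: h1; rewrite mulf_eq0 (negPf ss') /= subr_eq0 => /eqP ->.
by move/eqP: h2; rewrite mulf_eq0 (negPf ss') /= subr_eq0 => /eqP ->.
Qed.

Lemma rayp_inj u v t1 t2 : u <> v -> rayp u v t1 = rayp u v t2 -> t1 = t2.
Proof. by move=> uv; rewrite !rayp_aff => /(aff_inj uv); lra. Qed.

Lemma rayp_eq_aff u v t s : u <> v -> rayp u v t = aff u v s -> s = 1 + t.
Proof. by move=> uv; rewrite rayp_aff => /(aff_inj uv). Qed.

Lemma cseg_sym a b : cseg a b = cseg b a.
Proof.
have sub x y : cseg x y `<=` cseg y x.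
  move=> z [t [/andP[t0 t1] ->]]; exists (1 - t).
  by split; [apply/andP; split; lra | rewrite [in RHS]aff_sym; congr aff; ring].
by apply/seteqP; split; exact: sub.
Qed.

Lemma oseg_sym a b : oseg a b = oseg b a.
Proof.
have sub x y : oseg x y `<=` oseg y x.
  move=> z [t [/andP[t0 t1] ->]]; exists (1 - t).
  by split; [apply/andP; split; lra | rewrite [in RHS]aff_sym; congr aff; ring].
by apply/seteqP; split; exact: sub.
Qed.

Lemma cseg_l a b : cseg a b a.
Proof. by exists 0; rewrite aff0; split=> //; apply/andP; split; lra. Qed.

Lemma cseg_r a b : cseg a b b.
Proof. by exists 1; rewrite aff1; split=> //; apply/andP; split; lra. Qed.

Lemma oseg_cseg a b : oseg a b `<=` cseg a b.
Proof.
by move=> x [t [/andP[? ?] ->]]; exists t; split=> //; apply/andP; split; lra.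
Qed.

Lemma oseg_neq_l a b x : a <> b -> oseg a b x -> x <> a.
Proof.
by move=> ab [t [/andP[t0 t1] ->]]; rewrite -{2}(aff0 a b) => /(aff_inj ab); lra.
Qed.

Lemma oseg_neq_r a b x : a <> b -> oseg a b x -> x <> b.
Proof.
by move=> ab [t [/andP[t0 t1] ->]]; rewrite -{2}(aff1 a b) => /(aff_inj ab); lra.
Qed.

Lemma cseg_eq a b u v : a <> b -> cseg a b = cseg u v ->
  (u = a /\ v = b) \/ (u = b /\ v = a).
Proof.
move=> ab e.
have [r [/andP[r0 r1] eb]] : cseg u v b by rewrite -e; exact: cseg_r.
have [r' [/andP[r'0 r'1] ea]] : cseg u v a by rewrite -e; exact: cseg_l.
have [s' [/andP[s'0 s'1] ev]] : cseg a b v by rewrite e; exact: cseg_r.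
have [s [/andP[s0 s1] eu]] : cseg a b u by rewrite e; exact: cseg_l.
subst u v; rewrite aff_aff in ea; rewrite aff_aff in eb.
have e0 : 0 = s + r' * (s' - s) by apply: (aff_inj ab); rewrite aff0.
have e1 : 1 = s + r * (s' - s) by apply: (aff_inj ab); rewrite aff1.
have [s_eq0|s_neq0] := eqVneq s 0.
  subst s; left; rewrite aff0; split=> //.
  have -> : s' = 1 by nra.
  by rewrite aff1.
have r'_eq1 : r' = 1.
  have : (1 - r') * s = 0 by nra.
  by move/eqP; rewrite mulf_eq0 (negPf s_neq0) orbF subr_eq0 => /eqP <-.
subst r'; have -> : s' = 0 by lra.
have -> : s = 1 by nra.
by right; rewrite aff0 aff1.
Qed.

Lemma endpt_cseg a b x : a <> b -> endpt (cseg a b) x -> x = a \/ x = b.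
Proof. by move=> ab [y [_ /(cseg_eq ab) [[-> _]|[-> _]]]]; [left|right]. Qed.

Lemma endpt_l a b : a <> b -> endpt (cseg a b) a.
Proof. by move=> ab; exists b; split=> // e; apply: ab. Qed.

Lemma endpt_r a b : a <> b -> endpt (cseg a b) b.
Proof. by move=> ab; exists a; rewrite cseg_sym; split=> // e; apply: ab. Qed.

Lemma endpt_in S x : endpt S x -> S x.
Proof. by move=> [y [_ ->]]; exact: cseg_l. Qed.

Lemma relint_in S x : relint S x -> S x.
Proof. by move=> [a [b [_ [-> h]]]]; exact: oseg_cseg. Qed.

Lemma relint_cseg a b x : a <> b -> relint (cseg a b) x -> oseg a b x.
Proof.
by move=> ab [u [v [_ [/(cseg_eq ab) [[-> ->]|[-> ->]] h]]]] //; rewrite oseg_sym.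
Qed.

Lemma cseg_line a b x y : x <> y -> cseg a b x -> cseg a b y ->
  cseg a b `<=` lineL x y.
Proof.
move=> xy [s [_ ex]] [s' [_ ey]] z [t [_ ->]].
have ss' : s' - s != 0.
  by rewrite subr_eq0; apply/eqP => es; apply: xy; rewrite ex ey es.
by exists ((t - s) / (s' - s)); rewrite ex ey aff_aff; congr aff; field.
Qed.

Lemma aligned_cseg a b u v x y : x <> y ->
  cseg a b x -> cseg a b y -> cseg u v x -> cseg u v y ->
  aligned (cseg a b) (cseg u v).
Proof. by move=> xy *; exists x, y; split=> //; split; exact: cseg_line. Qed.

Lemma oseg_rayp u v t : u <> v -> 0 < t -> oseg (rayp u v t) u v.
Proof.
move=> uv t0; have t1 : 1 + t != 0 by rewrite gt_eqF //; lra.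
exists (t / (1 + t)); split.
  by apply/andP; split; [apply: divr_gt0; lra | rewrite ltr_pdivrMr; lra].
by rewrite rayp_aff aff_aff_left -[LHS](aff1 u v); congr aff; field.
Qed.

Lemma cseg_sub_rayp u v t : 0 < t -> cseg u v `<=` cseg u (rayp u v t).
Proof.
move=> t0 x [r [/andP[r0 r1] ->]]; have t1 : 1 + t != 0 by rewrite gt_eqF //; lra.
exists (r / (1 + t)); split.
  by apply/andP; split; [apply: divr_ge0; lra | rewrite ler_pdivrMr; lra].
by rewrite rayp_aff aff_left_aff; congr aff; field.
Qed.

Lemma oseg_rayp_inv u v t x : 0 < t -> oseg (rayp u v t) v x ->
  exists2 t', 0 < t' < t & x = rayp u v t'.
Proof.
move=> t0 [r [/andP[r0 r1] ->]]; exists (t * (1 - r)).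
  by apply/andP; split; nra.
by rewrite !rayp_aff aff_aff_right; congr aff; ring.
Qed.

End AffineGeometry.

Section TTessellation.
Variable R : realType.
Variable D : set (pt R).
Implicit Types (T : tess R) (a b u v w x y : pt R).

Lemma Ttess_cseg T S : is_Ttess D T -> T S -> exists a b, a <> b /\ S = cseg a b.
Proof. by move=> [_ [h _]] /h [a [b [ab [-> _]]]]; exists a, b. Qed.

Lemma Ttess_oseg_interior T a b x : is_Ttess D T -> T (cseg a b) -> a <> b ->
  oseg a b x -> interior D x.
Proof.
move=> [_ [hseg _]] /hseg [a' [b' [_ [e [_ [_ sub]]]]]] ab xab; apply: sub.
by case: (cseg_eq ab e) => [[-> ->]|[-> ->]] //; rewrite oseg_sym.
Qed.

Lemma skel_seg T S x : T S -> S x -> skel D T x.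
Proof. by move=> TS Sx; right; exists S. Qed.

(* Two segments sharing two points would be aligned. *)
Lemma Ttess_seg_eq T S S' x y : is_Ttess D T -> T S -> T S' ->
  x <> y -> S x -> S' x -> S y -> S' y -> S = S'.
Proof.
move=> hT TS TS' xy Sx S'x Sy S'y; apply: contrapT => SS'.
have [_ [_ [_ hpair]]] := hT; have [+ _] := hpair _ _ TS TS' SS'; apply.
have [a [b [ab eS]]] := Ttess_cseg hT TS; have [u [v [uv eS']]] := Ttess_cseg hT TS'.
by subst S S'; exact: (aligned_cseg xy).
Qed.

Lemma Ttess_cseg_end_inj T u1 u2 v : is_Ttess D T ->
  T (cseg u1 v) -> T (cseg u2 v) -> u1 <> v -> u2 <> v -> u1 = u2.
Proof.
move=> hT T1 T2 u1v u2v.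
have e : cseg u1 v = cseg u2 v.
  apply: contrapT => ne; have [_ [_ [_ hpair]]] := hT.
  have [_ hmeet] := hpair _ _ T1 T2 ne.
  case: (hmeet v (cseg_r _ _) (cseg_r _ _)).
    by move=> [_ /(relint_cseg u2v) /(oseg_neq_r u2v)].
  by move=> [_ /(relint_cseg u1v) /(oseg_neq_r u1v)].
by case: (cseg_eq u1v e) => [[-> _] //|[e2 _]]; exfalso; exact: u2v.
Qed.

Lemma Ttess_cseg_through_inj T a b1 b2 v : is_Ttess D T ->
  T (cseg a b1) -> T (cseg a b2) -> a <> b1 -> a <> b2 ->
  oseg a b1 v -> oseg a b2 v -> b1 = b2.
Proof.
move=> hT T1 T2 ab1 ab2 v1 v2.
have av : a <> v by move=> e; apply: (oseg_neq_l ab1 v1); rewrite e.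
have e : cseg a b1 = cseg a b2.
  exact: (Ttess_seg_eq hT T1 T2 av (cseg_l _ _) (cseg_l _ _)
           (oseg_cseg v1) (oseg_cseg v2)).
by have [[_ ->]|[e1 _]] := cseg_eq ab1 e; [|exfalso; exact: ab1].
Qed.

Lemma flip_rel_uniq T F T1 w1 T2 w2 : is_Ttess D T ->
  flip_rel D T F T1 w1 -> flip_rel D T F T2 w2 -> T1 = T2 /\ w1 = w2.
Proof.
case: F => a v hT; rewrite /flip_rel /=.
move=> [b1 [u1 [ab1 [Tab1 [uv1 [Tuv1 [_ [vab1 [_ [[t1 [t10 [ew1 [skw1 min1]]]] eT1]]]]]]]]]].
move=> [b2 [u2 [ab2 [Tab2 [uv2 [Tuv2 [_ [vab2 [_ [[t2 [t20 [ew2 [skw2 min2]]]] eT2]]]]]]]]]].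
have eb := Ttess_cseg_through_inj hT Tab1 Tab2 ab1 ab2 vab1 vab2; subst b2.
have eu := Ttess_cseg_end_inj hT Tuv1 Tuv2 uv1 uv2; subst u2.
have et : t1 = t2.
  have [lt|gt|//] := ltgtP t1 t2.
    by exfalso; apply: (min2 t1); [apply/andP; split | rewrite -ew1].
  by exfalso; apply: (min1 t2); [apply/andP; split | rewrite -ew2].
by subst; split.
Qed.

Lemma flips_finite T : is_Ttess D T -> finite_set (flips D T).
Proof.
move=> hT; have [Tfin _] := hT.
set E := \bigcup_(S in T) [set x | endpt S x].
have Efin : finite_set E.
  apply: bigcup_finite => // S TS; have [a [b [ab ->]]] := Ttess_cseg hT TS.
  by apply: (sub_finite_set _ (finite_set2 a b)) => x /(endpt_cseg ab) [->|->];
    [left|right].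
apply: (sub_finite_set _ (finite_setX Efin Efin)).
move=> [a v] [T' [w [[b [u [ab [Tab [uv [Tuv _]]]]]] _]]]; split.
  by exists (cseg a b) => //; exact: endpt_l.
by exists (cseg u v) => //; exact: endpt_r.
Qed.

Section FlipReverse.
Variables (T T' : tess R) (a b u v w : pt R) (r t : R).
Hypotheses (hT : is_Ttess D T) (ab : a <> b) (Tab : T (cseg a b)).
Hypotheses (uv : u <> v) (Tuv : T (cseg u v)) (uvab : cseg u v <> cseg a b).
Hypotheses (r01 : 0 < r < 1) (ev : v = aff a b r).
Hypothesis novtx : forall x, oseg a v x -> ~ vtx T x.
Hypotheses (t0 : 0 < t) (ew : w = rayp u v t).
Hypothesis minw : forall t', 0 < t' < t -> ~ skel D T (rayp u v t').
Hypothesis eT' : T' = (T `\` [set cseg a b; cseg u v]) `|` [set cseg v b; cseg u w].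

Let vab : oseg a b v. Proof. by exists r. Qed.

Let av : a <> v. Proof. by move=> e; apply: (oseg_neq_l ab vab); rewrite e. Qed.

Let bv : b <> v. Proof. by move=> e; apply: (oseg_neq_r ab vab); rewrite e. Qed.

Let wu : w <> u.
Proof. by rewrite ew -{2}(aff0 u v) => /(rayp_eq_aff uv); have := t0; lra. Qed.

Let wv : w <> v.
Proof. by rewrite ew -{2}(aff1 u v) => /(rayp_eq_aff uv); have := t0; lra. Qed.

Let T'_old S : T S -> S <> cseg a b -> S <> cseg u v -> T' S.
Proof. by move=> TS Sab Suv; rewrite eT'; left; split=> // -[]. Qed.

Let T'_vb : T' (cseg v b). Proof. by rewrite eT'; right; left. Qed.

Let T'_uw : T' (cseg u w). Proof. by rewrite eT'; right; right. Qed.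

Let uw_notin_T : ~ T (cseg u w).
Proof.
move=> Tuw; have vuw : cseg u w v by rewrite ew; apply: cseg_sub_rayp; [|exact: cseg_r].
have e := Ttess_seg_eq hT Tuv Tuw uv (cseg_l _ _) (cseg_l _ _) (cseg_r _ _) vuw.
by case: (cseg_eq uv e) => [[_ e2]|[e2 _]]; [exact: wv | exact: uv].
Qed.

Let vb_notin_T : ~ T (cseg v b).
Proof.
move=> Tvb; have e := Ttess_seg_eq hT Tab Tvb bv (cseg_r _ _) (cseg_r _ _)
                       (oseg_cseg vab) (cseg_l _ _).
by case: (cseg_eq ab e) => [[e2 _]|[e2 _]]; [exact: av | exact: bv].
Qed.

(* ]v, w[ precedes the first hit w of the ray from u through v. *)
Lemma flip_new_edge_no_vtx x : oseg w v x -> ~ vtx T' x.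
Proof.
rewrite ew => /(oseg_rayp_inv t0) [t' /andP[t'0 t't] ex] [S [T'S eS]].
have skx : ~ skel D T x by rewrite ex; apply: minw; apply/andP; split.
move: T'S eS; rewrite eT' => -[[TS _]|[->|->]] eS.
- by apply: skx; apply: (skel_seg TS); exact: endpt_in.
- case: (endpt_cseg (nesym bv) eS) => ex'; rewrite ex' in ex skx.
    by move: ex; rewrite -{1}(aff1 u v) => /esym /(rayp_eq_aff uv); lra.
  by apply: skx; apply: (skel_seg Tab); exact: cseg_r.
- case: (endpt_cseg (nesym wu) eS) => ex'; rewrite ex' in ex.
    by move: ex; rewrite -{1}(aff0 u v) => /esym /(rayp_eq_aff uv); lra.
  by move: ex; rewrite ew => /(rayp_inj uv); lra.
Qed.

Lemma flip_old_end_skel : skel D T' a.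
Proof.
have [_ [_ [hend _]]] := hT.
case: (hend _ a Tab (endpt_l ab)) => [[bda _]|[S' [TS' [S'ab aS']]]]; first by left.
have S'uv : S' <> cseg u v.
  move=> e; subst S'; apply: uvab.
  exact: (Ttess_seg_eq hT Tuv Tab av (relint_in aS') (cseg_l _ _)
           (cseg_r _ _) (oseg_cseg vab)).
exact: (skel_seg (T'_old TS' S'ab S'uv) (relint_in aS')).
Qed.

(* In T', the open edge ]a, v[ meets no segment: the old segments only touched
   it at vertices of T, of which there are none. *)
Lemma flip_deleted_edge_free q : 0 < q < r -> ~ skel D T' (aff a b q).
Proof.
move=> /andP[q0 qr]; have /andP[r0 r1] := r01; set y := aff a b q.
have yab : oseg a b y by exists q; split=> //; apply/andP; split; lra.
have yav : oseg a v y.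
  have r_neq0 : r != 0 by rewrite gt_eqF.
  exists (q / r); split; last by rewrite ev aff_left_aff /y; congr aff; field.
  by apply/andP; split; [apply: divr_gt0; lra | rewrite ltr_pdivrMr; lra].
have yv : y <> v by rewrite ev => /(aff_inj ab); lra.
have [_ [_ [_ hpair]]] := hT.
case=> [[_ nint]|[S T'S Sy]].
  by apply: nint; exact: (Ttess_oseg_interior hT Tab ab yab).
move: T'S Sy; rewrite eT' => -[[TS nS]|[->|->]] Sy.
- have Sab : S <> cseg a b by move=> e; apply: nS; left.
  have [_ hmeet] := hpair _ _ TS Tab Sab.
  case: (hmeet _ Sy (oseg_cseg yab)) => [[eSy _]|[eab _]].
    by apply: (novtx yav); exists S.
  by case: (endpt_cseg ab eab); [exact: oseg_neq_l yab | exact: oseg_neq_r yab].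
- move: Sy => [q' [/andP[q'0 q'1]]].
  by rewrite ev aff_aff_right => /(aff_inj ab); nra.
- have [+ _] := hpair _ _ Tuv Tab uvab; apply; exists y, v; split=> //; split.
    apply: subset_trans (cseg_sub_rayp (u:=u) (v:=v) t0) _; rewrite -ew.
    by apply: cseg_line => //; rewrite ew; apply: cseg_sub_rayp; [|exact: cseg_r].
  by apply: cseg_line => //; exact: oseg_cseg.
Qed.

Lemma flip_reverse_hit : a = rayp b v (r / (1 - r)).
Proof.
have r1 : 1 - r != 0 by case/andP: r01 => _ r1; rewrite gt_eqF // subr_gt0.
by rewrite ev rayp_aff_left -{1}(aff0 a b); congr aff; field.
Qed.

Lemma flip_reverse_first_hit t' : 0 < t' < r / (1 - r) -> ~ skel D T' (rayp b v t').
Proof.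
move=> /andP[t'0 t'1]; have /andP[r0 r1] := r01.
rewrite ltr_pdivlMr ?subr_gt0 // in t'1.
by rewrite ev rayp_aff_left; apply: flip_deleted_edge_free; apply/andP; split; nra.
Qed.

Lemma flip_reverse_tess :
  T = (T' `\` [set cseg w u; cseg b v]) `|` [set cseg v u; cseg b a].
Proof.
rewrite eT'; apply/seteqP; split=> S.
  move=> TS.
  have [->|Sab] := pselect (S = cseg a b); first by right; right; rewrite cseg_sym.
  have [->|Suv] := pselect (S = cseg u v); first by right; left; rewrite cseg_sym.
  left; split; first by left; split=> // -[].
  by move=> [eS|eS]; [apply: uw_notin_T | apply: vb_notin_T]; rewrite cseg_sym -eS.
move=> [[[[TS _]|[->|->]] nS]|[->|->]] //; try by rewrite cseg_sym.
  by exfalso; apply: nS; right; rewrite cseg_sym.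
by exfalso; apply: nS; left; rewrite cseg_sym.
Qed.

Lemma flip_reverse : flip_rel D T' (w, v) T a.
Proof.
exists u, b; split=> //; split; first by rewrite cseg_sym; exact: T'_uw.
split=> //; split; first by rewrite cseg_sym; exact: T'_vb.
split; first by move=> /(cseg_eq bv) [[_ /uv]|[/wv]].
split; first by rewrite ew; exact: oseg_rayp.
split; first exact: flip_new_edge_no_vtx.
split; last exact: flip_reverse_tess.
exists (r / (1 - r)); split; first by case/andP: r01 => r0 r1; apply: divr_gt0; lra.
split; first exact: flip_reverse_hit.
by split; [exact: flip_old_end_skel | exact: flip_reverse_first_hit].
Qed.

End FlipReverse.

Lemma flip_rel_rev T a v T' w : is_Ttess D T ->
  flip_rel D T (a, v) T' w -> flip_rel D T' (w, v) T a.
Proof.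
move=> hT [b [u [ab [Tab [uv [Tuv [uvab [[r [r01 ev]] rest]]]]]]]].
move: rest => [novtx [[t [t0 [ew [_ minw]]]] eT']].
exact: (flip_reverse hT ab Tab uv Tuv uvab r01 ev novtx t0 ew minw eT').
Qed.

Lemma flipT_flipinv_spec T F : is_Ttess D T -> flips D T F ->
  flip_rel D T F (flipT D T F) (flipinv D T F).1 /\ is_Ttess D (flipT D T F).
Proof.
move=> hT [T0 [w0 [rel0 hT0]]].
have [w1 rel1] : exists w1, flip_rel D T F (flipT D T F) w1.
  by apply: (xgetPex T (P := [set T' | exists w, flip_rel D T F T' w])); exists T0, w0.
have [T2 rel2] : exists T2, flip_rel D T F T2 (flipinv D T F).1.
  by apply: (xgetPex F.1 (P := [set w | exists T', flip_rel D T F T' w])); exists w0, T0.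
have [<- _] := flip_rel_uniq hT rel0 rel1.
by have [_ <-] := flip_rel_uniq hT rel0 rel2.
Qed.

Lemma flipT_flipinvK T F : is_Ttess D T -> flips D T F ->
  [/\ flips D (flipT D T F) (flipinv D T F),
      flipT D (flipT D T F) (flipinv D T F) = T &
      flipinv D (flipT D T F) (flipinv D T F) = F].
Proof.
case: F => a v hT hF.
have [rel hT'] := flipT_flipinv_spec hT hF.
have -> : flipinv D T (a, v) = ((flipinv D T (a, v)).1, v) by [].
move: rel hT'; set T' := flipT D T (a, v); set w := (flipinv D T (a, v)).1.
move=> rel hT'; have rev := flip_rel_rev hT rel.
have hF' : flips D T' (w, v) by exists T, a.
have [rel' _] := flipT_flipinv_spec hT' hF'.
have [e1 e2] := flip_rel_uniq hT' rev rel'.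
by split; [| rewrite -e1 | rewrite [LHS]surjective_pairing -e2].
Qed.

Definition aff_closed_family (L : set (set (pt R))) :=
  forall l, L l -> forall x y t, l x -> l y -> l (aff x y t).

Lemma TL_flip (L : set (set (pt R))) T F T' w : aff_closed_family L ->
  TL D L T -> flip_rel D T F T' w -> is_Ttess D T' -> TL D L T'.
Proof.
case: F => a v hL [hT [onL coverL]]; rewrite /flip_rel /=.
move=> [b [u [ab [Tab [uv [Tuv [uvab [vab [_ [[t [t0 [ew _]]] eT']]]]]]]]]] hT'.
have [r [/andP[r0 r1] ev]] := vab.
have vb_ab : cseg v b `<=` cseg a b.
  move=> x [q [/andP[q0 q1] ->]]; rewrite ev aff_aff_right.
  by exists (r + q * (1 - r)); split=> //; apply/andP; split; nra.
have uw_line l : L l -> cseg u v `<=` l -> cseg u w `<=` l.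
  move=> Ll sub x [q [_ ->]]; rewrite ew rayp_aff aff_left_aff.
  by apply: (hL _ Ll); apply: sub; [exact: cseg_l | exact: cseg_r].
split=> //; split.
  move=> S; rewrite eT' => -[[TS _]|[->|->]]; first exact: onL.
  - by have [l [Ll sub]] := onL _ Tab; exists l; split=> //; exact: subset_trans sub.
  - by have [l [Ll sub]] := onL _ Tuv; exists l; split=> //; exact: uw_line.
move=> l Ll; have [S [TS sub]] := coverL _ Ll.
have [eS|Sab] := pselect (S = cseg a b).
  exists (cseg v b); split; first by rewrite eT'; right; left.
  by apply: subset_trans sub; rewrite eS.
have [eS|Suv] := pselect (S = cseg u v).
  exists (cseg u w); split; first by rewrite eT'; right; right.
  by apply: uw_line => //; rewrite -eS.
by exists S; split=> //; rewrite eT'; left; split=> // -[].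
Qed.

Definition flip_pair (p : tess R * (pt R * pt R)) : tess R * (pt R * pt R) :=
  (flipT D p.1 p.2, flipinv D p.1 p.2).

Lemma flip_pairK L : {in TL D L `*`` flips D, involutive flip_pair}.
Proof.
move=> [T F] /set_mem [[hT _] hF] /=.
by have [_ e1 e2] := flipT_flipinvK hT hF; rewrite /flip_pair /= e1 e2.
Qed.

Lemma flip_pair_TL L p : aff_closed_family L -> (TL D L `*`` flips D) p ->
  (TL D L `*`` flips D) (flip_pair p).
Proof.
case: p => T F hL [hTL hF] /=.
have [rel hT'] := flipT_flipinv_spec hTL.1 hF.
have [hF' _ _] := flipT_flipinvK hTL.1 hF.
by split=> //; exact: TL_flip hL hTL rel hT'.
Qed.

Lemma fsum_TL_flipinv (L : set (set (pt R))) (phi : (pt R * pt R * ttype D)%type -> R) :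
  aff_closed_family L -> (forall z, 0 <= phi z) ->
  (\sum_(T \in TL D L) \sum_(F \in flips D T)
      (phi (flipinv D T F, (flipT D T F : ttype D)))%:E)%E
  = (\sum_(T \in TL D L) \sum_(F \in flips D T) (phi (F, (T : ttype D)))%:E)%E.
Proof.
move=> hL phi0.
have flips_fin T : TL D L T -> finite_set (flips D T).
  by move=> [hT _]; exact: flips_finite.
rewrite !pair_fsbig_dep_ge0 //=; try by move=> *; rewrite lee_fin.
have bij : set_bij (TL D L `*`` flips D) (TL D L `*`` flips D) flip_pair.
  split.
  - by move=> p; exact: flip_pair_TL.
  - by move=> p q p_in q_in e; rewrite -(flip_pairK p_in) -(flip_pairK q_in) e.
  - move=> q q_in; exists (flip_pair q); first exact: flip_pair_TL hL q_in.
    exact: flip_pairK (mem_set q_in).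
by rewrite (reindex_fsbig flip_pair _ _ (fun p => (phi (p.2, (p.1 : ttype D)))%:E) bij).
Qed.

Lemma lines_of_aff_closed (s : seq (R * R)) : aff_closed_family (lines_of s).
Proof.
move=> l [[th p] _ ->] x y t; rewrite /lineP /= => hx hy.
transitivity ((x.1 * cos th + x.2 * sin th) +
  t * ((y.1 * cos th + y.2 * sin th) - (x.1 * cos th + x.2 * sin th))); first by ring.
by rewrite hx hy subrr mulr0 addr0.
Qed.

Lemma eq_poissonE (G1 G2 : set (set (pt R)) -> \bar R) :
  (forall s, G1 (lines_of s) = G2 (lines_of s)) -> poissonE D G1 = poissonE D G2.
Proof.
move=> eG; rewrite /poissonE.
rewrite (_ : (fun s => if indH D s then G1 (lines_of s) else 0%E) =
             (fun s => if indH D s then G2 (lines_of s) else 0%E)) //.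
by apply/funext => s; rewrite eG.
Qed.

End TTessellation.

Theorem proposition3 (R : realType) (D : set (pt R)) (hD : is_cvx_polygon D)
  (phi : (pt R * pt R * ttype D)%type -> R)
  (phi_ge0 : forall z, 0 <= phi z) (phi_meas : measurable_fun setT phi) :
  muE D (fun T => (\sum_(F \in flips D T)
                     (phi (flipinv D T F, (flipT D T F : ttype D)))%:E)%E)
  = muE D (fun T => (\sum_(F \in flips D T) (phi (F, (T : ttype D)))%:E)%E).
Proof.
rewrite /muE /unnorm; congr (_ * _)%E; apply: eq_poissonE => s.

by apply: fsum_TL_flipinv => //; exact: lines_of_aff_closed.
Qed.
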